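(* Let $L>0,\alpha>0$. For any $b\in\Lambda(\alpha)$ and any $\psi\in E_L$, $\int_{[0,L)}\psi'(x)^2dx-\int_{[0,L)}b(x)\psi(x)^2dx\ge-(\alpha+\alpha^2L^2)\int_{[0,L)}\psi(x)^2dx$.
   Context: $\Lambda(\alpha)$: $b\in C^1(\mathbb R)$, $b\ge0$, $L$-periodic, $\int_0^Lb=\alpha L$. $H^1_{per}=\{\varphi\in H^1_{loc}(\mathbb R):\varphi(x+L)=\varphi(x)\}$ and $E_L=\{\psi\in H^1_{per}:\psi(x)>0 \text{ for all }x\}$. *)

From HB Require Import structures.
From mathcomp Require Import all_boot all_order all_algebra.
From mathcomp Require Import all_classical all_reals all_analysis.
Set Implicit Arguments. Unset Strict Implicit. Unset Printing Implicit Defensive.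
Import Order.TTheory GRing.Theory Num.Theory.
Import numFieldNormedType.Exports.
Local Open Scope classical_set_scope.
Local Open Scope ring_scope.

Section Defs.
Variable R : realType.
Local Notation mu := (@lebesgue_measure R).

Definition periodic (L : R) (f : R -> R) : Prop := forall x, f (x + L) = f x.

Definition C1 (f : R -> R) : Prop :=
  (forall x, derivable f x 1) /\ continuous (derive1 f).

Definition Lambda (L alpha : R) (b : R -> R) : Prop :=
  [/\ C1 b, (forall x, 0 <= b x), periodic L b &
      Rintegral mu `[0, L] b = alpha * L].

(* dpsi is the (weak) derivative of psi, psi in H^1_loc(R): in dimension one,
   psi in H^1_loc(R) iff psi (its continuous representative) is locally
   absolutely continuous, psi(y) - psi(x) = int_x^y dpsi, with dpsi in L^2_loc. *)
Definition H1loc_deriv (psi dpsi : R -> R) : Prop :=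
  [/\ measurable_fun setT dpsi,
      (forall a c, a <= c -> mu.-integrable `[a, c] (fun x => ((dpsi x) ^+ 2)%:E)) &
      (forall a c, a <= c -> psi c - psi a = Rintegral mu `[a, c] dpsi)].

Definition E_L (L : R) (psi dpsi : R -> R) : Prop :=
  [/\ H1loc_deriv psi dpsi, periodic L psi & forall x, 0 < psi x].

End Defs.

From HB Require Import structures.
From mathcomp Require Import all_boot all_order all_algebra.
From mathcomp Require Import all_classical all_reals all_analysis.
From mathcomp Require Import measurable_realfun ring lra.
Import Order.TTheory GRing.Theory Num.Theory.
Import numFieldNormedType.Exports.
Local Open Scope classical_set_scope.
Local Open Scope ring_scope.
Local Notation mu := (@lebesgue_measure _).

(* Since [psi] is absolutely continuous with derivative [psi'], the oscillation
   of [psi^2] on [[0, L]] is at most [2 \int |psi| |psi'|], so [psi(x)^2] exceeds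
   the mean of [psi^2] by at most that much.  Integrating against [b >= 0] gives
   [\int b psi^2 <= alpha \int psi^2 + 2 alpha L \int |psi| |psi'|], and
   [2 alpha L |psi| |psi'| <= psi'^2 + alpha^2 L^2 psi^2] concludes.  The oscillation bound is
   obtained without a chain rule, by propagating a local estimate through a
   continuity-induction argument. *)

Section interval_integrals.
Context {R : realType}.
Implicit Types (a b k : R) (f g : R -> R) (D : set R).

Lemma continuous_itv_integrable a b f : continuous f ->
  mu.-integrable `[a, b] (EFin \o f).
Proof.
move=> cf; apply: continuous_compact_integrable; first exact: segment_compact.
exact: continuous_subspaceT.
Qed.

Lemma Rintegral_cst_itv a b k : a <= b -> \int[mu]_(x in `[a, b]) k = k * (b - a).
Proof.
rewrite Rintegral_cst //= lebesgue_measure_itv /= lte_fin.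
by rewrite le_eqVlt => /predU1P[->|->]; rewrite ?ltxx ?subrr.
Qed.

Lemma integrableZl_EFin D k f : measurable D ->
  mu.-integrable D (EFin \o f) -> mu.-integrable D (EFin \o (fun x => k * f x)).
Proof.
move=> mD fi; rewrite (_ : EFin \o _ = (fun x => k%:E * (EFin \o f) x)%E).
  exact: integrableZl.
by apply/funext => x /=; rewrite EFinM.
Qed.

Lemma integrableD_EFin D f g : measurable D ->
  mu.-integrable D (EFin \o f) -> mu.-integrable D (EFin \o g) ->
  mu.-integrable D (EFin \o (fun x => f x + g x)).
Proof.
move=> mD fi gi; rewrite (_ : EFin \o _ = (EFin \o f) \+ (EFin \o g)).
  exact: integrableD.
by apply/funext => x /=; rewrite EFinD.
Qed.

Lemma le_integrable_EFin D f g : measurable D -> measurable_fun D f ->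
  (forall x, D x -> `|f x| <= `|g x|) ->
  mu.-integrable D (EFin \o g) -> mu.-integrable D (EFin \o f).
Proof.
by move=> mD mf fg; apply: le_integrable => //; exact/measurable_EFinP.
Qed.

Lemma ge0_subset_Rintegral (A B : set R) f : measurable A -> measurable B ->
  A `<=` B -> (forall x, B x -> 0 <= f x) -> mu.-integrable B (EFin \o f) ->
  \int[mu]_(x in A) f x <= \int[mu]_(x in B) f x.
Proof.
move=> mA mB AB f0 fi; have fiA : mu.-integrable A (EFin \o f) by exact: integrableS fi.
rewrite /Rintegral fine_le //; try exact: integrable_fin_num.
by apply: ge0_subset_integral => //; case/integrableP: fi.
Qed.

Lemma Rintegral_itvccB a u v f : a <= u -> u <= v ->
  mu.-integrable `[a, v] (EFin \o f) ->
  \int[mu]_(x in `[a, v]) f x - \int[mu]_(x in `[a, u]) f x =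
  \int[mu]_(x in `[u, v]) f x.
Proof.
move=> au uv fi; rewrite Rintegral_itvB ?bnd_simp // Rintegral_itv_obnd_cbnd //.
by apply: integrableS fi => //; apply: subset_itvScc; rewrite bnd_simp.
Qed.

End interval_integrals.

(* A continuity-induction argument: the supremum of [{x in [a, b] | g x <= g a}]
   cannot stop short of [b]. *)
Lemma locally_nonincreasing_le {R : realType} (g : R -> R) (a b : R) : a <= b ->
  (forall s, a <= s -> s <= b -> exists2 d, 0 < d & forall x y, a <= x -> y <= b ->
     s - d < x -> x <= y -> y < s + d -> g y <= g x) ->
  g b <= g a.
Proof.
move=> ab gloc.
pose S := [set x | a <= x <= b /\ g x <= g a].
have Sa : S a by rewrite /S /= lexx ab.
have hS : has_sup S by split; [exists a | exists b => x [/andP[]]].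
set s := sup S.
have as_ : a <= s by exact: sup_upper_bound.
have sb : s <= b by apply: ge_sup => [|x [/andP[]]//]; exists a.
have [d d0 gd] := gloc s as_ sb.
have [x Sx sx] := sup_adherent d0 hS.
have xs : x <= s by exact: sup_upper_bound.
case: Sx => /andP[ax xb] gx.
have gS y : s <= y -> y <= b -> y < s + d -> g y <= g a.
  move=> sy yb yd; apply: le_trans gx; apply: gd => //; exact: le_trans sy.
have [sb'|bs] := ltP s b; last first.
  have -> : b = s by apply/eqP; rewrite eq_le sb bs.
  by apply: gS => //; rewrite ltrDl.
pose y := Num.min b (s + d / 2).
have Sy : S y.
  split; first by rewrite le_min ab ge_min lexx /=; lra.
  apply: gS; first by rewrite le_min (ltW sb') /=; lra.
    by rewrite ge_min lexx.
  by rewrite gt_min; apply/orP; right; lra.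
have : y <= s by exact: sup_upper_bound.
by rewrite ge_min leNgt sb' /=; lra.
Qed.

Section H1loc.
Context {R : realType} {psi f : R -> R}.
Hypothesis psif : H1loc_deriv psi f.

Lemma H1loc_deriv_integrable a c : a <= c -> mu.-integrable `[a, c] (EFin \o f).
Proof.
have [mf f2i _] := psif => ac.
apply: (@le_integrable_EFin _ _ _ (fun x => f x ^+ 2 + 1)) => //.
- exact: measurable_funS mf.
- move=> x _; rewrite [leRHS]ger0_norm ?addr_ge0 ?sqr_ge0 //.
  rewrite -real_normK ?num_real //; have := normr_ge0 (f x); nra.
- apply: integrableD_EFin => //; first exact: f2i.
  exact/continuous_itv_integrable/cst_continuous.
Qed.

Lemma H1loc_dist_le u v : u <= v ->
  `|psi v - psi u| <= \int[mu]_(x in `[u, v]) `|f x|.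
Proof.
have [_ _ psiE] := psif => uv; rewrite psiE //.
by apply: le_normr_Rintegral => //; exact: H1loc_deriv_integrable.
Qed.

(* [psi] agrees near [s] with [psi (s - 1) + \int_(s - 1)^x f], a parameterized
   integral, which is continuous. *)
Lemma H1loc_continuous : continuous psi.
Proof.
have [_ _ psiE] := psif => s.
have s1s1 : s - 1 < s + 1 by lra.
have fi := H1loc_deriv_integrable _ _ (ltW s1s1).
have [Fc _ _] := (continuous_within_itvP _ s1s1).1
  (parameterized_integral_continuous (ltW s1s1) fi).
have sin : s \in `]s - 1, s + 1[ by rewrite in_itv /=; apply/andP; split; lra.
have psi_near : \forall x \near s,
    psi (s - 1) + parameterized_integral mu (s - 1) x f = psi x.
  near=> x; have /andP[/ltW x1 _] : x \in `]s - 1, s + 1[.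
    by near: x; exact: near_in_itvoo sin.
  by rewrite /parameterized_integral -psiE // addrC subrK.
apply: cvg_trans (near_eq_cvg psi_near) _; rewrite -(nbhs_singleton psi_near).
exact: cvgD (cvg_cst _) (Fc s sin).
Unshelve. all: by end_near.
Qed.

Lemma H1loc_sqr_continuous : continuous (fun x => psi x ^+ 2).
Proof. by move=> x; apply: cvgM; exact: H1loc_continuous. Qed.

Lemma H1loc_deriv_norm_integrable a c : a <= c ->
  mu.-integrable `[a, c] (EFin \o (fun x => `|f x|)).
Proof. by move=> ac; apply: integrable_norm; exact: H1loc_deriv_integrable. Qed.

Lemma H1loc_norm_mul_integrable a c : a <= c ->
  mu.-integrable `[a, c] (EFin \o (fun x => `|psi x| * `|f x|)).
Proof.
move=> ac; have [mf _ _] := psif.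
have /compact_bounded[M [_ psiM]] := continuous_compact
  (continuous_subspaceT H1loc_continuous) (@segment_compact _ a c).
apply: (@le_integrable_EFin _ _ _ (fun x => (`|M| + 1) * `|f x|)) => //.
- apply: measurable_funM; apply: measurableT_comp => //.
    exact: measurable_funS (continuous_measurable_fun H1loc_continuous).
  exact: measurable_funS mf.
- move=> x xac; rewrite !normrM !normr_id ler_wpM2r //.
  rewrite [leRHS]ger0_norm ?addr_ge0 //; apply: psiM; last by exists x.
  by rewrite ltr_pwDr // ler_norm.
- by apply: integrableZl_EFin => //; exact: H1loc_deriv_norm_integrable.
Qed.

(* Near [s], [|psi v + psi u|] is at most [2 |psi s|] while [|psi| >= |psi s|]
   on [[u, v]], both up to [O(e)]; the error is paid by [e * \int |f|]. *)
Lemma H1loc_sqr_dist_le_near e s : 0 < e -> exists2 d, 0 < d &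
  forall u v, s - d < u -> u <= v -> v < s + d ->
  `|psi v ^+ 2 - psi u ^+ 2| <=
    2 * \int[mu]_(x in `[u, v]) (`|psi x| * `|f x|)
    + e * \int[mu]_(x in `[u, v]) `|f x|.
Proof.
move=> e0; have e4 : 0 < e / 4 by rewrite divr_gt0.
have /cvgrPdist_le/(_ _ e4)/nbhs_ballP[d d0 psi_s] := H1loc_continuous s.
exists d => // u v su uv vs.
have psi_near x : s - d < x -> x < s + d -> `|psi x - psi s| <= e / 4.
  by move=> sx xs; rewrite distrC; apply: psi_s; rewrite /ball /= ltr_norml; lra.
have hu := psi_near u su (le_lt_trans uv vs).
have hv := psi_near v (lt_le_trans su uv) vs.
set I := \int[mu]_(x in `[u, v]) `|f x|.
have hI : `|psi v - psi u| <= I := H1loc_dist_le _ _ uv.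
have hs : `|psi v + psi u| <= 2 * `|psi s| + e / 2.
  have -> : psi v + psi u = (psi v - psi s) + (psi u - psi s) + 2 * psi s by ring.
  have := ler_normD (psi v - psi s + (psi u - psi s)) (2 * psi s).
  have := ler_normD (psi v - psi s) (psi u - psi s).
  rewrite normrM (ger0_norm (ler0n _ 2)); lra.
have hA : (`|psi s| - e / 4) * I <= \int[mu]_(x in `[u, v]) (`|psi x| * `|f x|).
  rewrite -RintegralZl //; last exact: H1loc_deriv_norm_integrable.
  apply: le_Rintegral => //.
  - by apply: integrableZl_EFin => //; exact: H1loc_deriv_norm_integrable.
  - exact: H1loc_norm_mul_integrable.
  move=> x; rewrite /= in_itv /= => /andP[ux xv].
  apply: ler_wpM2r => //; have := psi_near x (lt_le_trans su ux) (le_lt_trans xv vs).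
  have := ler_normD (psi x) (psi s - psi x); rewrite addrC subrK distrC; lra.
have -> : psi v ^+ 2 - psi u ^+ 2 = (psi v - psi u) * (psi v + psi u) by ring.
rewrite normrM; have := ler_pM (normr_ge0 _) (normr_ge0 _) hI hs.
have := normr_ge0 (psi s); nra.
Qed.

Lemma H1loc_sqr_dist_le u v : u <= v ->
  `|psi v ^+ 2 - psi u ^+ 2| <= 2 * \int[mu]_(x in `[u, v]) (`|psi x| * `|f x|).
Proof.
move=> uv; set A := fun t => \int[mu]_(x in `[u, t]) (`|psi x| * `|f x|).
set B := fun t => \int[mu]_(x in `[u, t]) `|f x|.
rewrite -/(A v); have B0 : 0 <= B v by apply: Rintegral_ge0.
suff slack e : 0 < e -> `|psi v ^+ 2 - psi u ^+ 2| <= 2 * A v + e * B v.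
  apply/ler_addgt0Pr => t t0; have Bt : 0 < B v + 1 by rewrite ltr_wpDl.
  have := slack (t / (B v + 1)) (divr_gt0 t0 Bt).
  have : t / (B v + 1) * B v <= t by rewrite mulrAC ler_pdivrMr // ler_pM2l //; lra.
  lra.
move=> e0; pose G t := 2 * A t + e * B t.
have GB x y : u <= x -> x <= y -> G y - G x =
    2 * \int[mu]_(z in `[x, y]) (`|psi z| * `|f z|) + e * \int[mu]_(z in `[x, y]) `|f z|.
  move=> ux xy; have uy := le_trans ux xy.
  have -> : G y - G x = 2 * (A y - A x) + e * (B y - B x) by rewrite /G; ring.
  rewrite /A /B !Rintegral_itvccB //.
    exact: H1loc_deriv_norm_integrable.
  exact: H1loc_norm_mul_integrable.
have Gdec (sg : R) : sg = 1 \/ sg = -1 ->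
    sg * psi v ^+ 2 - G v <= sg * psi u ^+ 2 - G u.
  move=> sgE; apply: (@locally_nonincreasing_le _ (fun t => sg * psi t ^+ 2 - G t)) => //.
  move=> s _ _; have [d d0 near_s] := H1loc_sqr_dist_le_near e s e0.
  exists d => // x y ux _ sx xy ys.
  have := near_s x y sx xy ys; rewrite -GB // ler_norml.
  by case: sgE => ->; lra.
have := Gdec 1 (or_introl erefl); have := Gdec (-1) (or_intror erefl).
have := GB u v (lexx u) uv; rewrite -/(A v) -/(B v) -/(G v).
rewrite ler_norml; lra.
Qed.

Lemma H1loc_sqr_le_mean a c x : a < c -> a <= x <= c ->
  psi x ^+ 2 <= (\int[mu]_(y in `[a, c]) psi y ^+ 2) / (c - a)
                + 2 * \int[mu]_(y in `[a, c]) (`|psi y| * `|f y|).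
Proof.
move=> ac /andP[ax xc]; set A := 2 * \int[mu]_(y in `[a, c]) _.
have var u v : a <= u -> u <= v -> v <= c -> `|psi v ^+ 2 - psi u ^+ 2| <= A.
  move=> au uv vc; apply: le_trans (H1loc_sqr_dist_le _ _ uv) _.
  rewrite ler_pM2l //; apply: ge0_subset_Rintegral => //.
    by apply: subset_itvScc; rewrite bnd_simp.
  exact: H1loc_norm_mul_integrable _ _ (ltW ac).
have psi2i := continuous_itv_integrable a c _ H1loc_sqr_continuous.
have Ai : mu.-integrable `[a, c] (EFin \o cst A).
  exact/continuous_itv_integrable/cst_continuous.
have : \int[mu]_(y in `[a, c]) psi x ^+ 2 <= \int[mu]_(y in `[a, c]) (psi y ^+ 2 + A).
  apply: le_Rintegral => //; first exact/continuous_itv_integrable/cst_continuous.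
    exact: integrableD_EFin.
  move=> y; rewrite /= in_itv /= => /andP[ay yc].
  have [yx|xy] := leP y x; first by have := var _ _ ay yx xc; rewrite ler_norml; lra.
  by have := var _ _ ax (ltW xy) yc; rewrite ler_norml; lra.
rewrite RintegralD // !Rintegral_cst_itv ?(ltW ac) // => h.
have ca : 0 < c - a by rewrite subr_gt0.
by rewrite -(ler_pM2r ca) mulrDl divfK ?gt_eqF //; lra.
Qed.

Lemma H1loc_weighted_sqr_le (b : R -> R) (a c beta : R) : a < c ->
  continuous b -> (forall x, 0 <= b x) -> \int[mu]_(x in `[a, c]) b x = beta ->
  \int[mu]_(x in `[a, c]) (b x * psi x ^+ 2) <=
  \int[mu]_(x in `[a, c]) f x ^+ 2
  + (beta / (c - a) + beta ^+ 2) * \int[mu]_(x in `[a, c]) psi x ^+ 2.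
Proof.
move=> ac bc b0 bE; have [_ f2i _] := psif; have ac' := ltW ac.
have psi2i := continuous_itv_integrable a c _ H1loc_sqr_continuous.
set P := \int[mu]_(x in `[a, c]) psi x ^+ 2.
set A := \int[mu]_(x in `[a, c]) (`|psi x| * `|f x|).
have amgm : 2 * beta * A <= \int[mu]_(x in `[a, c]) f x ^+ 2 + beta ^+ 2 * P.
  have pfi := H1loc_norm_mul_integrable a c ac'; have f2i' := f2i a c ac'.
  have bpsi2i : mu.-integrable `[a, c] (EFin \o (fun x => beta ^+ 2 * psi x ^+ 2)).
    exact: integrableZl_EFin.
  rewrite /A /P -!RintegralZl // -RintegralD //.
  apply: le_Rintegral => //; first exact: integrableZl_EFin.
    exact: integrableD_EFin.
  move=> x _; have := sqr_ge0 (`|f x| - beta * `|psi x|).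
  rewrite -[f x ^+ 2]real_normK ?num_real // -[psi x ^+ 2]real_normK ?num_real //.
  nra.
have bi := continuous_itv_integrable a c _ bc.
have mean : \int[mu]_(x in `[a, c]) (b x * psi x ^+ 2) <= (P / (c - a) + 2 * A) * beta.
  rewrite -bE -RintegralZl //; apply: le_Rintegral => //.
  - by apply: continuous_itv_integrable => x; exact: cvgM (bc x) (H1loc_sqr_continuous x).
  - exact: integrableZl_EFin.
  move=> x; rewrite /= in_itv /= => xac.
  by rewrite mulrC ler_wpM2r // H1loc_sqr_le_mean.
have : (P / (c - a) + 2 * A) * beta = beta / (c - a) * P + 2 * beta * A by ring.
rewrite mulrDl; lra.
Qed.

End H1loc.

Theorem mainTheorem14 (R : realType) (L alpha : R) (b psi dpsi : R -> R) :
  0 < L -> 0 < alpha -> Lambda L alpha b -> E_L L psi dpsi ->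
  Rintegral (@lebesgue_measure R) `[0, L[ (fun x => (dpsi x) ^+ 2)
  - Rintegral (@lebesgue_measure R) `[0, L[ (fun x => b x * (psi x) ^+ 2)
  >= - (alpha + alpha ^+ 2 * L ^+ 2)
     * Rintegral (@lebesgue_measure R) `[0, L[ (fun x => (psi x) ^+ 2).
Proof.
move=> L0 _ [[db _] b0 _ bE] [psif _ _].
have bc : continuous b.
  by move=> x; apply: differentiable_continuous; rewrite -derivable1_diffP; exact: db.
have := H1loc_weighted_sqr_le psif _ _ _ _ L0 bc b0 bE.
rewrite subr0 mulfK ?gt_eqF // exprMn.
have closedE g : mu.-integrable `[0, L] (EFin \o g) ->
    \int[mu]_(x in `[0, L[) g x = \int[mu]_(x in `[0, L]) g x.
  move=> gi; apply: Rintegral_itv_bndo_bndc; apply: integrableS gi => //.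
  by apply: subset_itvScc; rewrite bnd_simp.
have [_ f2i _] := psif; rewrite !closedE; first lra.
- by apply: continuous_itv_integrable => x; exact: cvgM (bc x) (H1loc_sqr_continuous psif x).
- exact: f2i (ltW L0).
- exact: continuous_itv_integrable _ _ _ (H1loc_sqr_continuous psif).
Qed.
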